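(* Let $\sigma$ be a reasonable strategy of player $0$ in the escape arena $\mathcal{A}_\bot$ and $I_\sigma$ its set of improvements. Then every direct improvement $\sigma'$ of $\sigma$ satisfies $\sigma'\preceq I_\sigma$, i.e. $\mathcal{V}_{\sigma'}(s)\preceq\mathcal{V}_{I_\sigma}(s)$ for all vertices $s$.
   Context: Parity game arena: $\mathcal{A}=(V,E,o,c)$ with $V$ finite, $E\subseteq V\times V$, every vertex has a successor, owner map $o:V\to\{0,1\}$, colouring $c:V\to\{0,\dots,d-1\}$; $V_i=o^{-1}(i)$. An infinite vertex sequence is won by player $0$ (parity condition) iff the largest colour occurring infinitely often is even. A cycle $s_0\dots s_n$ ($s_{j+1}\in s_jE$, $s_0\in s_nE$) is $i$-dominated if its largest colour has parity $i$. Escape arena $\mathcal{A}_\bot$: vertices $V\cup\{\bot\}$, edges $E_\bot=E\cup(V_0\times\{\bot\})$, $\bot$ owned by player $0$ with no outgoing edges. Let $E_0=E_\bot\cap (V_0\times(V\cup\{\bot\}))$, $E_1=E\cap(V_1\times V)$. A strategy of player $i$ is a set $\sigma\subseteq E_i$ with $s\sigma\neq\emptyset$ for all $s\in V_i$. $\mathcal{A}_\bot|_{\sigma,\tau}$ is the graph with edge set $\sigma\cup\tau$, $\mathcal{A}_\bot|_\sigma$ the graph with edge set $\sigma\cup E_1$; a play is a maximal path (infinite or ending in $\bot$). Colour profiles: $\mathcal{P}=\mathbb{Z}^d\cup\{-\infty,\infty\}$, $\text{\o}$ the zero vector. $\wp(s)$ ($s\in V$) is the unit vector at coordinate $c(s)$;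 for a finite path $\wp$ is the sum over its vertices in $V$; for an infinite play $\wp=\infty$ if won by player $0$ under the parity condition, else $-\infty$. Addition componentwise, $x+\infty=\infty$, $x+(-\infty)=-\infty$. Total order $\prec$: $-\infty$ least, $\infty$ greatest; for distinct $p,p'\in\mathbb{Z}^d$ with $k$ the largest index where they differ, $p\prec p'$ iff ($k$ even and $p_k<p'_k$) or ($k$ odd and $p_k>p'_k$). Valuation of a player-$0$ strategy $\sigma$: $\mathcal{V}_\sigma(\bot)=\text{\o}$, and for $s\in V$, $\mathcal{V}_\sigma(s)=\min^{\prec}_{\tau}\max^{\prec}\{\wp(\pi)\mid\pi\text{ a play in }\mathcal{A}_\bot|_{\sigma,\tau}\text{ from }s\}$, min over player-$1$ strategies. $\sigma$ is reasonable if $\mathcal{A}_\bot|_\sigma$ has no $1$-dominated cycle. For strategies, $\sigma_a\preceq\sigma_b$ iff $\mathcal{V}_{\sigma_a}(s)\preceq\mathcal{V}_{\sigma_b}(s)$ for all $s$. For reasonable $\sigma$, $(s,t)\in E_0$ is an improvement if $\mathcal{V}_\sigma(s)\preceq\wp(s)+\mathcal{V}_\sigma(t)$; $I_\sigma$ is the set of all improvements. A direct improvement of $\sigma$ is a player-$0$ strategy $\sigma'\subseteq I_\sigma$. *)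

From mathcomp Require Import all_boot all_order all_algebra.
From Stdlib Require Import ClassicalEpsilon.
Set Implicit Arguments. Unset Strict Implicit. Unset Printing Implicit Defensive.
Import Order.TTheory GRing.Theory Num.Theory.

(* Conventions:
   - vertices: a finType V; the escape arena has vertex type [option V],
     with [None] playing the role of the escape vertex ⊥.
   - owner o : V -> bool, with o v = false meaning v ∈ V_0 (player 0) and
     o v = true meaning v ∈ V_1 (player 1).
   - colouring c : V -> 'I_d.
   - E : rel V is the edge relation of the arena. *)

Definition asb (P : Prop) : bool :=
  if excluded_middle_informative P then true else false.

Section Parity.
Variables (V : finType) (d : nat) (E : rel V) (o : V -> bool) (c : V -> 'I_d).

Definition Ebot (x y : option V) : bool :=
  match x, y with
  | Some u, Some v => E u v
  | Some u, None => ~~ o u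
  | None, _ => false
  end.

Definition E0 (s : V) (t : option V) : bool := ~~ o s && Ebot (Some s) t.
Definition E1 (s t : V) : bool := o s && E s t.

Definition strategy0 (sigma : V -> option V -> bool) : Prop :=
  (forall s t, sigma s t -> E0 s t) /\
  (forall s, ~~ o s -> exists t, sigma s t).

Definition strategy1 (tau : V -> V -> bool) : Prop :=
  (forall s t, tau s t -> E1 s t) /\
  (forall s, o s -> exists t, tau s t).

Definition graph_st (sigma : V -> option V -> bool) (tau : V -> V -> bool)
  (x y : option V) : bool :=
  match x with
  | Some u => sigma u y || (match y with Some v => tau u v | None => false end)
  | None => false
  end.

Definition graph_s (sigma : V -> option V -> bool) (x y : option V) : bool :=
  match x with
  | Some u => sigma u y || (match y with Some v => E1 u v | None => false end)
  | None => false
  end.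

Inductive profile : Type :=
  | PNegInf : profile
  | PFin : {ffun 'I_d -> int} -> profile
  | PInf : profile.

Definition pzero : profile := PFin [ffun => 0%R].

Definition unitc (x : option V) : {ffun 'I_d -> int} :=
  [ffun i => match x with Some v => Posz (c v == i : nat) | None => 0%R end].

Definition pvtx (s : V) : profile := PFin (unitc (Some s)).

Definition ppath (l : seq (option V)) : profile :=
  PFin [ffun i => (\sum_(x <- l) unitc x i)%R].

Definition padd (x y : profile) : profile :=
  match y with
  | PInf => PInf
  | PNegInf => PNegInf
  | PFin b => match x with
              | PFin a => PFin [ffun i => (a i + b i)%R]
              | _ => x
              end
  end.

Definition plt_fin (a b : {ffun 'I_d -> int}) : Prop :=
  exists k : 'I_d,
    (forall j : 'I_d, (k < j)%N -> a j = b j) /\ a k <> b k /\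
    (if odd k then (b k < a k)%R else (a k < b k)%R).

Definition plt (x y : profile) : Prop :=
  match x, y with
  | PNegInf, PNegInf => False
  | PNegInf, _ => True
  | PFin _, PNegInf => False
  | PFin a, PFin b => plt_fin a b
  | PFin _, PInf => True
  | PInf, _ => False
  end.

Definition ple (x y : profile) : Prop := x = y \/ plt x y.

Definition inf_often (p : nat -> option V) (k : nat) : Prop :=
  forall N, exists n, (N <= n)%N /\ exists v, p n = Some v /\ nat_of_ord (c v) = k.

Definition won_by_0 (p : nat -> option V) : Prop :=
  exists k, inf_often p k /\ ~~ odd k /\ forall k', inf_often p k' -> (k' <= k)%N.

Definition play_profile (G : option V -> option V -> bool) (x : option V)
  (pr : profile) : Prop :=
  (exists p : nat -> option V, p 0%N = x /\ (forall n, G (p n) (p n.+1)) /\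
      pr = (if asb (won_by_0 p) then PInf else PNegInf))
  \/
  (exists l : seq (option V), path G x l /\ (forall y, ~~ G (last x l) y) /\
      pr = ppath (x :: l)).

Definition is_max (S : profile -> Prop) (p : profile) : Prop :=
  S p /\ forall q, S q -> ple q p.
Definition is_min (S : profile -> Prop) (p : profile) : Prop :=
  S p /\ forall q, S q -> ple p q.

Definition maxval (sigma : V -> option V -> bool) (tau : V -> V -> bool)
  (s : V) : profile :=
  epsilon (inhabits PNegInf) (is_max (play_profile (graph_st sigma tau) (Some s))).

Definition valuation (sigma : V -> option V -> bool) (x : option V) : profile :=
  match x with
  | None => pzero
  | Some s => epsilon (inhabits PNegInf)
      (is_min (fun q => exists tau, strategy1 tau /\ q = maxval sigma tau s))
  end.

Definition reasonable (sigma : V -> option V -> bool) : Prop :=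
  forall (cyc : seq V), cyc != [::] ->
    cycle (fun u v => graph_s sigma (Some u) (Some v)) cyc ->
    ~~ odd (\max_(v <- cyc) nat_of_ord (c v)).

Definition improvements (sigma : V -> option V -> bool) (s : V) (t : option V) : bool :=
  E0 s t && asb (ple (valuation sigma (Some s)) (padd (pvtx s) (valuation sigma t))).

Definition strat_le (sa sb : V -> option V -> bool) : Prop :=
  forall s : V, ple (valuation sa (Some s)) (valuation sb (Some s)).

End Parity.

From mathcomp Require Import all_boot all_order all_algebra zify.
From Stdlib Require Import Classical ClassicalEpsilon FunctionalExtensionality.
Set Implicit Arguments. Unset Strict Implicit. Unset Printing Implicit Defensive.
Import Order.TTheory GRing.Theory Num.Theory.

(* Only the inclusion of sigma' in I_sigma matters.  Fix a player-1 strategy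
   tau.  Every play of A_bot|_{sigma',tau} is a play of A_bot|_{I_sigma,tau}:
   its edges lie in I_sigma \cup tau, and since sigma' and tau are strategies
   its only possible dead end is bot, which is also a dead end of the larger
   graph.  So the best play against tau under sigma' is dominated by the best
   one under I_sigma, and choosing tau optimal against I_sigma yields
   V_sigma'(s) <= V_I_sigma(s).

   The substance lies in showing that the extrema defining valuations exist.
   The minimum ranges over the finitely many player-1 strategies.  For the
   maximum over plays from x: if some infinite play from x is won by player 0
   it is infinity; otherwise every cycle reachable from x is 1-dominated (an
   even-dominated one would give a winning lasso), so cutting a cycle out of a
   finite play increases its profile, and the maximum is attained among the
   finitely many simple finite plays, or is -infinity if there are none. *)


Lemma asbT (P : Prop) : P -> asb P = true.
Proof. by rewrite /asb; case: excluded_middle_informative. Qed.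

Lemma asbF (P : Prop) : ~ P -> asb P = false.
Proof. by rewrite /asb; case: excluded_middle_informative. Qed.

Lemma asbP (P : Prop) : asb P -> P.
Proof. by rewrite /asb; case: excluded_middle_informative. Qed.

Lemma not_uniq_split (T : eqType) (s : seq T) :
  ~~ uniq s -> exists s1 y s2 s3, s = s1 ++ y :: s2 ++ y :: s3.
Proof.
elim: s => //= a s IH; rewrite negb_and negbK => /orP [/splitPr[p1 p2] | /IH].
  by exists [::], a, p1, p2.
by case=> s1 [y [s2 [s3 ->]]]; exists (a :: s1), y, s2, s3.
Qed.

Definition bounded_seqs (T : finType) (n : nat) : seq (seq T) :=
  [seq val t | m <- iota 0 n.+1, t <- enum {: m.-tuple T}].

Lemma mem_bounded_seqs (T : finType) n (s : seq T) :
  size s <= n -> s \in bounded_seqs T n.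
Proof.
move=> le_s_n; apply/allpairsPdep; exists (size s), (in_tuple s).
by rewrite mem_iota mem_enum ltnS.
Qed.

Lemma cycle_nth_modS (T : Type) (e : rel T) (y : T) (q : seq T) n :
  let k := size (y :: q) in
  cycle e (y :: q) -> e (nth y (y :: q) (n %% k)) (nth y (y :: q) (n.+1 %% k)).
Proof.
move=> k cyc_yq; have /(sortedP y) cyc_e : sorted e (rcons (y :: q) y) by [].
set i := n %% k.
have lt_i_k : i < k by rewrite ltn_mod.
have := cyc_e i; rewrite size_rcons -/k ltnS !nth_rcons_default => /(_ lt_i_k).
have -> : n.+1 %% k = i.+1 %% k by rewrite -addn1 -modnDml addn1.
case: (ltngtP i.+1 k) => [lt_Si_k | lt_k_Si | ->]; first by rewrite modn_small.
  by rewrite ltnS leqNgt lt_i_k in lt_k_Si.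
by rewrite modnn [nth _ _ k]nth_default.
Qed.

Section SeqArgmax.
Variables (T : Type) (R : T -> T -> Prop).
Hypothesis R_total : forall x y, R x y \/ R y x.
Hypothesis R_trans : forall x y z, R x y -> R y z -> R x z.

Lemma seq_argmax (I : eqType) (f : I -> T) (s : seq I) :
  s != [::] -> exists2 i, i \in s & {in s, forall j, R (f j) (f i)}.
Proof.
have R_refl x : R x x by case: (R_total x x).
elim: s => // i s IH _; have [-> | /IH [m s_m max_m]] := eqVneq s [::].
  by exists i; rewrite ?mem_head // => j; rewrite inE => /eqP ->.
have [R_im | R_mi] := R_total (f i) (f m).
  by exists m => [|j /predU1P [-> | /max_m]] //; rewrite inE s_m orbT.
exists i => [|j /predU1P [-> | /max_m R_jm]]; first exact: mem_head.
  exact: R_refl.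
exact: R_trans R_jm R_mi.
Qed.
End SeqArgmax.

Section ProfileOrder.
Variable d : nat.
Implicit Types (a b e : {ffun 'I_d -> int}) (x y z : profile d).

Lemma plt_fin_trans a b e : plt_fin a b -> plt_fin b e -> plt_fin a e.
Proof.
case=> k1 [eq1 [ne1 lt1]] [k2 [eq2 [ne2 lt2]]].
case: (ltngtP k1 k2) => [lt_k | lt_k | /val_inj eq_k].
- exists k2; rewrite (eq1 k2 lt_k); split=> // j lt_j.
  by rewrite eq1 ?eq2 // (ltn_trans lt_k lt_j).
- exists k1; rewrite -(eq2 k1 lt_k); split=> // j lt_j.
  by rewrite eq1 ?eq2 // (ltn_trans lt_k lt_j).
- subst k2; exists k1; split=> [j lt_j|]; first by rewrite eq1 ?eq2.
  case: (odd k1) lt1 lt2 => lt1 lt2.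
  + have lt_ea := lt_trans lt2 lt1.
    by split=> // eq_ae; rewrite eq_ae ltxx in lt_ea.
  + have lt_ae := lt_trans lt1 lt2.
    by split=> // eq_ae; rewrite eq_ae ltxx in lt_ae.
Qed.

Lemma plt_fin_total a b : a = b \/ plt_fin a b \/ plt_fin b a.
Proof.
case: (classic (a = b)) => [-> | ne_ab]; [by left | right].
have [j0 ne_j0] : exists j, a j != b j.
  apply: NNPP => none; apply/ne_ab/ffunP => j; apply/eqP.
  by apply: contraT => ne_j; case: none; exists j.
have [k ne_k max_k] := @arg_maxnP _ j0 (fun i => a i != b i) val ne_j0.
have eq_above (j : 'I_d) : k < j -> a j = b j.
  move=> lt_kj; apply/eqP; apply: contraT => /max_k /=.
  by rewrite leqNgt lt_kj.
have ne_ab_k : a k <> b k by move/eqP; rewrite (negbTE ne_k).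
case: (ltgtP (a k) (b k)) => [lt_k | lt_k | /ne_ab_k //];
  case Ok: (odd k); [right | left | left | right]; exists k; rewrite Ok;
  split=> [j /eq_above -> // | ]; split=> // eq_k;
  by apply: ne_ab_k; rewrite eq_k.
Qed.

Lemma plt_trans x y z : plt x y -> plt y z -> plt x z.
Proof. by case: x y z => [|a|] [|b|] [|e|] //=; apply: plt_fin_trans. Qed.

Lemma ple_trans x y z : ple x y -> ple y z -> ple x z.
Proof.
by case=> [-> | lt_xy] // [<- | lt_yz]; right => //; apply: plt_trans lt_yz.
Qed.

Lemma ple_total x y : ple x y \/ ple y x.
Proof.
rewrite /ple; case: x y => [|a|] [|b|] /=; try tauto.
by case: (plt_fin_total a b) => [-> | []]; tauto.
Qed.

Lemma ple_argmax (I : eqType) (f : I -> profile d) s :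
  s != [::] -> exists2 i, i \in s & {in s, forall j, ple (f j) (f i)}.
Proof. exact: (seq_argmax (@ple_total) (@ple_trans) f (s := s)). Qed.

Lemma ple_argmin (I : eqType) (f : I -> profile d) s :
  s != [::] -> exists2 i, i \in s & {in s, forall j, ple (f i) (f j)}.
Proof.
apply: (seq_argmax (R := fun x y => ple y x)) => [x y | x y z le_yx le_zy].
  exact: ple_total.
exact: ple_trans le_zy le_yx.
Qed.

Lemma is_max_le (S S' : profile d -> Prop) m m' :
  is_max S m -> is_max S' m' -> (forall p, S p -> S' p) -> ple m m'.
Proof. by move=> [S_m _] [_ max_m'] sub; apply/max_m'/sub. Qed.

End ProfileOrder.

Section Plays.
Variables (V : finType) (d : nat) (c : V -> 'I_d) (G : rel (option V)).
Hypothesis G_bot : forall y, G None y = false.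

Definition ccount (l : seq (option V)) : {ffun 'I_d -> int} :=
  [ffun i => (\sum_(x <- l) unitc c x i)%R].

Definition colour (x : option V) : nat := if x is Some v then c v else 0.

Definition inf_walk (x : option V) (p : nat -> option V) : Prop :=
  p 0 = x /\ forall n, G (p n) (p n.+1).

Definition no_win (x : option V) : Prop :=
  forall p, inf_walk x p -> ~ won_by_0 c p.

Definition finite_play (x : option V) (l : seq (option V)) : bool :=
  path G x l && [forall y, ~~ G (last x l) y].

Lemma ccount_cat_mid a b e i :
  ccount (a ++ b ++ e) i = (ccount (a ++ e) i + ccount b i)%R.
Proof. by rewrite !ffunE !big_cat /= addrCA addrC. Qed.

Lemma mem_cycle_some q x : cycle G q -> x \in q -> exists v, x = Some v.
Proof.
move=> cyc_q /(next_cycle cyc_q); case: x => [v _ | ]; first by exists v.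
by rewrite G_bot.
Qed.

(* The two profiles first differ at the largest colour of the cycle. *)
Lemma plt_fin_add_odd_cycle (u : {ffun 'I_d -> int}) (q : seq (option V)) z :
  z \in q -> {in q, forall z', colour z' <= colour z} -> odd (colour z) ->
  plt_fin [ffun i => (u i + ccount q i)%R] u.
Proof.
case: z => [v | //] q_v max_v odd_v.
have count_pos : (0 < ccount q (c v))%R.
  rewrite ffunE (big_rem _ q_v) /= /unitc ffunE eqxx ltr_pwDl ?sumr_ge0 //.
  by move=> -[w | ] _; rewrite ?ffunE.
exists (c v); rewrite ffunE [odd _]odd_v ltrDl count_pos; split.
- move=> j lt_vj; rewrite !ffunE big1_seq ?addr0 // => -[w | ] /andP [_ q_w];
    rewrite ffunE //.
  case: eqP => // eq_wj; have := max_v _ q_w.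
  by rewrite /= eq_wj leqNgt lt_vj.
- by split=> // /eqP; rewrite -subr_eq0 addrC addKr gt_eqF.
Qed.

Lemma exists_max_colour (q : seq (option V)) :
  q != [::] -> exists2 z, z \in q & {in q, forall z', colour z' <= colour z}.
Proof.
apply: (seq_argmax (R := fun m n => m <= n)) => [m n | m n p].
  exact/orP/leq_total.
exact: leq_trans.
Qed.

Section Lasso.
Variables (s1 : seq (option V)) (y : option V) (q : seq (option V)).

Definition lasso (n : nat) : option V :=
  if n < size s1 then nth y s1 n else nth y (y :: q) ((n - size s1) %% size (y :: q)).

Lemma lasso_prefix n : n <= size s1 -> lasso n = nth y s1 n.
Proof.
rewrite /lasso leq_eqVlt => /predU1P [-> | -> //].
by rewrite ltnn subnn mod0n [RHS]nth_default.
Qed.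

Lemma lasso_cycle n : lasso (size s1 + n) = nth y (y :: q) (n %% size (y :: q)).
Proof. by rewrite /lasso ltnNge leq_addr addKn. Qed.

Lemma lasso_walk :
  sorted G (rcons s1 y) -> cycle G (y :: q) -> inf_walk (head y s1) lasso.
Proof.
move=> /(sortedP y) s1_G cyc_G; split=> [|n]; first by rewrite lasso_prefix.
case: (ltnP n (size s1)) => [lt_n | /subnKC <-].
  rewrite !lasso_prefix ?(ltnW lt_n) //.
  by have := s1_G n; rewrite size_rcons ltnS !nth_rcons_default; apply.
by rewrite -addnS !lasso_cycle; apply: cycle_nth_modS.
Qed.

Lemma lasso_won v : Some v \in y :: q -> {in y :: q, forall z, colour z <= c v} ->
  ~~ odd (c v) -> won_by_0 c lasso.
Proof.
move=> q_v max_v even_v; exists (c v); split=> [N | ]; last split=> // k'.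
  exists (size s1 + (N * size (y :: q) + index (Some v) (y :: q))); split.
    by rewrite (leq_trans _ (leq_addl _ _)) // (leq_trans _ (leq_addr _ _))
      ?leq_pmulr.
  exists v; rewrite lasso_cycle modnMDl modn_small ?index_mem ?nth_index //.
move=> /(_ (size s1)) [n [le_n [w [lasso_n <-]]]].
move: lasso_n; rewrite -(subnKC le_n) lasso_cycle => nth_w.
by apply: (max_v (Some w)); rewrite -nth_w mem_nth // ltn_mod.
Qed.

End Lasso.

Lemma no_win_cycle_odd s1 y q z :
  no_win (head y s1) -> sorted G (rcons s1 y) -> cycle G (y :: q) ->
  z \in y :: q -> {in y :: q, forall z', colour z' <= colour z} -> odd (colour z).
Proof.
move=> no_win_x s1_G cyc_G q_z max_z; apply/negPn/negP => even_z.
have [v z_v] := mem_cycle_some cyc_G q_z; subst z.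
exact: no_win_x _ (lasso_walk s1_G cyc_G) (lasso_won s1 q_z max_z even_z).
Qed.

Lemma finite_play_cut x l s1 y s2 s3 :
  x :: l = s1 ++ y :: s2 ++ y :: s3 -> finite_play x l ->
  [/\ head y s1 = x, sorted G (rcons s1 y), cycle G (y :: s2)
    & exists2 l', x :: l' = s1 ++ y :: s3 & finite_play x l'].
Proof.
move=> eq_l /andP [path_l dead_l].
have : sorted G (x :: l) := path_l.
rewrite eq_l sorted_cat_cons cat_path /= => /and3P [s1_G s2_G /andP [s2_y s3_G]].
have head_s1 : head y s1 = x by case: s1 eq_l {s1_G} => [|a s1] [-> _].
split=> //; first by rewrite /= rcons_path s2_G.
have eq_l' : x :: behead (s1 ++ y :: s3) = s1 ++ y :: s3.
  by case: s1 head_s1 {eq_l s1_G} => [|a s1] /= ->.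
set l' := behead _ in eq_l' *.
exists l' => //; rewrite /finite_play.
have -> : path G x l' = sorted G (x :: l') by [].
have -> : last x l' = last x l.
  rewrite -[last x l']/(last x (x :: l')) -[last x l]/(last x (x :: l)) eq_l eq_l'.
  by rewrite !last_cat /= last_cat.
by rewrite eq_l' sorted_cat_cons s1_G s3_G.
Qed.

Lemma finite_play_shorten x l : no_win x -> finite_play x l ->
  exists2 l', finite_play x l' &
    uniq (x :: l') /\ ple (ppath c (x :: l)) (ppath c (x :: l')).
Proof.
move=> no_win_x; have [n] := ubnP (size l); elim: n l => // n IH l lt_l_n play_l.
have [uniq_l | /not_uniq_split [s1 [y [s2 [s3 eq_l]]]]] := boolP (uniq (x :: l)).
  by exists l => //; split=> //; left.
have [head_s1 s1_G cyc_G [l' eq_l' play_l']] := finite_play_cut eq_l play_l.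
have lt_l'_n : size l' < n.
  move: (congr1 size eq_l) (congr1 size eq_l') lt_l_n.
  by rewrite /= !size_cat /= size_cat /=; lia.
have [l'' play_l'' [uniq_l'' le_l'_l'']] := IH l' lt_l'_n play_l'.
exists l'' => //; split=> //; apply: ple_trans le_l'_l''; right.
have -> : ppath c (x :: l) = PFin [ffun i => (ccount (x :: l') i + ccount (y :: s2) i)%R].
  congr PFin; apply/ffunP => i.
  by rewrite [RHS]ffunE eq_l' -ccount_cat_mid ffunE eq_l ffunE.
have [z q_z max_z] := exists_max_colour (isT : y :: s2 != [::]).
apply: (plt_fin_add_odd_cycle _ q_z max_z).
by apply: (no_win_cycle_odd _ s1_G cyc_G q_z max_z); rewrite head_s1.
Qed.

Lemma exists_inf_walk x :
  (forall l, path G x l -> exists y, G (last x l) y) -> exists p, inf_walk x p.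
Proof.
move=> ext; pose step z := odflt z [pick y | G z y].
have step_G z : (exists y, G z y) -> G z (step z).
  by case=> y G_zy; rewrite /step; case: pickP => [// | /(_ y)]; rewrite G_zy.
pose p n := iter n step x.
have reach n : exists2 l, path G x l & last x l = p n.
  elim: n => [|n [l path_l last_l]]; first by exists [::].
  exists (rcons l (p n.+1)); last exact: last_rcons.
  by rewrite rcons_path path_l last_l /=; apply/step_G; rewrite -last_l; apply: ext.
exists p; split=> // n; apply: step_G.
by have [l path_l <-] := reach n; apply: ext.
Qed.

Lemma no_win_play_profile x pr : no_win x -> play_profile c G x pr ->
  pr = PNegInf d \/ exists2 l, finite_play x l & pr = ppath c (x :: l).
Proof.
move=> no_win_x [[p [p0 [step_p ->]]] | [l [path_l [dead_l ->]]]].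
  by left; rewrite asbF //; apply: no_win_x.
by right; exists l => //; rewrite /finite_play path_l; apply/forallP.
Qed.

Lemma won_play_profile_max x : ~ no_win x -> is_max (play_profile c G x) (PInf d).
Proof.
move=> win_x; split=> [|[|a|] _]; [| by right | by right | by left].
have [p [[p0 step_p] won_p]] : exists p, inf_walk x p /\ won_by_0 c p.
  by apply: NNPP => none; apply: win_x => p walk_p won_p; apply: none; exists p.
by left; exists p; rewrite asbT.
Qed.

Lemma no_finite_play_max x : no_win x -> ~ (exists l, finite_play x l) ->
  is_max (play_profile c G x) (PNegInf d).
Proof.
move=> no_win_x no_play.
split=> [|pr /(no_win_play_profile no_win_x) [-> | [l play_l _]]].
- have [p [p0 step_p]] : exists p, inf_walk x p.
    apply: exists_inf_walk => l path_l; apply: NNPP => dead; apply: no_play.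
    exists l; rewrite /finite_play path_l; apply/forallP => y; apply/negP => G_y.
    by apply: dead; exists y.
  by left; exists p; rewrite asbF //; apply: no_win_x.
- by left.
- by case: no_play; exists l.
Qed.

Lemma finite_play_max x l0 : no_win x -> finite_play x l0 ->
  exists m, is_max (play_profile c G x) m.
Proof.
move=> no_win_x play_l0.
pose plays := [seq l <- bounded_seqs (option V) #|{: option V}| | finite_play x l].
have shorter l : finite_play x l ->
    exists2 l', l' \in plays & ple (ppath c (x :: l)) (ppath c (x :: l')).
  move=> /(finite_play_shorten no_win_x) [l' play_l' [uniq_l' le_l_l']].
  exists l' => //; rewrite mem_filter play_l' mem_bounded_seqs // ltnW //.
  by rewrite -[(size l').+1]/(size (x :: l')) -(card_uniqP uniq_l') max_card.
have [l1 plays_l1 _] := shorter _ play_l0.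
have ne_plays : plays != [::] by apply: contraTneq plays_l1 => ->.
have [m plays_m max_m] := ple_argmax (fun l => ppath c (x :: l)) ne_plays.
exists (ppath c (x :: m)); split.
  move: plays_m; rewrite mem_filter => /andP [/andP [path_m /forallP dead_m] _].
  by right; exists m.
move=> pr /(no_win_play_profile no_win_x) [-> | [l play_l ->]]; first by right.
have [l' plays_l' le_l_l'] := shorter _ play_l.
exact: ple_trans le_l_l' (max_m _ plays_l').
Qed.

Lemma play_profile_max x : exists m, is_max (play_profile c G x) m.
Proof.
have [no_win_x | win_x] := classic (no_win x); last first.
  by exists (PInf d); apply: won_play_profile_max.
have [[l0 play_l0] | no_play] := classic (exists l, finite_play x l).
  exact: finite_play_max play_l0.
by exists (PNegInf d); apply: no_finite_play_max.
Qed.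

End Plays.

Lemma play_profile_sub (V : finType) d (c : V -> 'I_d) (G G' : rel (option V))
    x pr :
  subrel G G' -> (forall y z, G' y z -> exists z', G y z') ->
  play_profile c G x pr -> play_profile c G' x pr.
Proof.
move=> sub ext [[p [p0 [step_p ->]]] | [l [path_l [dead_l ->]]]].
  by left; exists p; split=> //; split=> // n; apply: sub.
right; exists l; split; first exact: sub_path path_l.
split=> // z; apply/negP => /ext [z' G_z'].
by have := dead_l z'; rewrite G_z'.
Qed.

Section Valuation.
Variables (V : finType) (d : nat) (E : rel V) (o : V -> bool) (c : V -> 'I_d).
Implicit Types (sigma : V -> option V -> bool) (tau : V -> V -> bool).

Lemma strategy1_E1 : (forall v, exists w, E v w) -> strategy1 E o (E1 E o).
Proof.
by move=> succ; split=> // v o_v; have [w E_vw] := succ v; exists w; rewrite /E1 o_v.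
Qed.

Lemma graph_st_total sigma tau u : strategy0 E o sigma -> strategy1 E o tau ->
  exists y, graph_st sigma tau (Some u) y.
Proof.
move=> [_ sigma_tot] [_ tau_tot]; case o_u: (o u).
  by have [w tau_uw] := tau_tot u o_u; exists (Some w); rewrite /= tau_uw orbT.
by have [t sigma_ut] := sigma_tot u (negbT o_u); exists t; rewrite /= sigma_ut.
Qed.

Lemma maxval_spec sigma tau s :
  is_max (play_profile c (graph_st sigma tau) (Some s)) (maxval c sigma tau s).
Proof. by apply: epsilon_spec; apply: play_profile_max. Qed.

Lemma maxval_sub sigma sigma' tau s :
  strategy0 E o sigma -> strategy1 E o tau -> (forall a b, sigma a b -> sigma' a b) ->
  ple (maxval c sigma tau s) (maxval c sigma' tau s).
Proof.
move=> sigma0 tau1 sub; apply: is_max_le (maxval_spec _ _ _) (maxval_spec _ _ _) _.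
move=> pr; apply: play_profile_sub => [[u|] y //= /orP [/sub -> // | ->] | ].
  by rewrite orbT.
move=> [u|] z //= _; exact: graph_st_total.
Qed.

Lemma valuation_spec sigma s : (exists tau, strategy1 E o tau) ->
  is_min (fun q => exists tau, strategy1 E o tau /\ q = maxval c sigma tau s)
    (valuation E o c sigma (Some s)).
Proof.
move=> [tau0 tau0_1]; apply: epsilon_spec.
(* Player-1 strategies are enumerated through their graphs in {ffun V * V -> bool}. *)
pose rel_of (f : {ffun V * V -> bool}) a b := f (a, b).
have rel_ofK tau : rel_of [ffun ab => tau ab.1 ab.2] = tau.
  by apply: functional_extensionality => a; apply: functional_extensionality => b;
    rewrite /rel_of ffunE.
pose strats :=
  [seq f <- enum {: {ffun V * V -> bool}} | asb (strategy1 E o (rel_of f))].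
have strats_tau tau : strategy1 E o tau -> [ffun ab => tau ab.1 ab.2] \in strats.
  by move=> tau1; rewrite mem_filter mem_enum rel_ofK asbT.
have ne_strats : strats != [::] by apply: contraTneq (strats_tau _ tau0_1) => ->.
have [f strats_f min_f] := ple_argmin (fun f => maxval c sigma (rel_of f) s) ne_strats.
exists (maxval c sigma (rel_of f) s); split.
  by exists (rel_of f); move: strats_f; rewrite mem_filter => /andP [/asbP].
by move=> _ [tau [tau1 ->]]; rewrite -(rel_ofK tau); apply/min_f/strats_tau.
Qed.

End Valuation.

Theorem mainTheorem2 (V : finType) (d : nat) (E : rel V) (o : V -> bool)
  (c : V -> 'I_d)
  (Hsucc : forall v : V, exists w, E v w)
  (sigma : V -> option V -> bool)
  (Hsigma : strategy0 E o sigma)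
  (Hreas : reasonable E o c sigma)
  (sigma' : V -> option V -> bool)
  (Hsigma' : strategy0 E o sigma')
  (Hdirect : forall s t, sigma' s t -> improvements E o c sigma s t) :
  strat_le E o c sigma' (improvements E o c sigma).
Proof.
have tau_ex : exists tau, strategy1 E o tau by exists (E1 E o); apply: strategy1_E1.
move=> s.
have [[tau [tau1 ->]] _] := valuation_spec c (improvements E o c sigma) s tau_ex.
have [_ min'] := valuation_spec c sigma' s tau_ex.
apply: ple_trans (min' _ (ex_intro _ tau (conj tau1 erefl))) _.
exact: maxval_sub Hsigma' tau1 Hdirect.
Qed.
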